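(* Let $X=(X,a)$ be a $\mathsf V$-category and $\Delta\subseteq X\times X$ the diagonal, where $X\times X$ is the product $\mathsf V$-category. Then the L-closure of $\Delta$ in $X\times X$ is $\overline\Delta=\{(x,y)\in X\times X\mid x\cong y\}$.
   Context: Let $\mathsf V=(\mathsf V,\otimes,k)$ be a commutative unital quantale (complete lattice with commutative associative $\otimes$, neutral element $k$, $u\otimes(-)$ preserving suprema). A $\mathsf V$-category $(X,a)$ is a set with $a:X\times X\to\mathsf V$, $k\le a(x,x)$, $a(x,y)\otimes a(y,z)\le a(x,z)$; a $\mathsf V$-functor $f:(X,a)\to(Y,b)$ satisfies $a(x,y)\le b(f(x),f(y))$. The product $X\times X$ in the category of $\mathsf V$-categories has structure $((x,y),(x',y'))\mapsto a(x,x')\wedge a(y,y')$. For points, $u\cong v$ in $(Z,c)$ means $k\le c(u,v)$ and $k\le c(v,u)$. The L-closure of a subset $M$ of a $\mathsf V$-category $W$ is $\overline M=\{w\in W\mid$ for all $\mathsf V$-functors $g,h:W\to Z$ with $g|_M=h|_M$ one has $g(w)\cong h(w)\}$. *)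

Record quantale := Quantale {
  qcar :> Type;
  qle : qcar -> qcar -> Prop;
  qsup : (qcar -> Prop) -> qcar;
  qtens : qcar -> qcar -> qcar;
  qk : qcar;
  qle_refl : forall u, qle u u;
  qle_trans : forall u v w, qle u v -> qle v w -> qle u w;
  qle_antisym : forall u v, qle u v -> qle v u -> u = v;
  qsup_ub : forall (P : qcar -> Prop) u, P u -> qle u (qsup P);
  qsup_least : forall (P : qcar -> Prop) v,
      (forall u, P u -> qle u v) -> qle (qsup P) v;
  qtens_assoc : forall u v w, qtens u (qtens v w) = qtens (qtens u v) w;
  qtens_comm : forall u v, qtens u v = qtens v u;
  qtens_k : forall u, qtens qk u = u;
  qtens_sup : forall u (P : qcar -> Prop),
      qtens u (qsup P) = qsup (fun w => exists v, P v /\ w = qtens u v)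
}.

Definition qmeet (V : quantale) (u v : V) : V :=
  qsup V (fun w => qle V w u /\ qle V w v).

Definition is_vcat (V : quantale) (X : Type) (a : X -> X -> V) : Prop :=
  (forall x, qle V (qk V) (a x x)) /\
  (forall x y z, qle V (qtens V (a x y) (a y z)) (a x z)).

Definition is_vfunctor (V : quantale) (X Y : Type) (a : X -> X -> V)
  (b : Y -> Y -> V) (f : X -> Y) : Prop :=
  forall x y, qle V (a x y) (b (f x) (f y)).

Definition prod_struct (V : quantale) (X : Type) (a : X -> X -> V)
  : (X * X) -> (X * X) -> V :=
  fun p q => qmeet V (a (fst p) (fst q)) (a (snd p) (snd q)).

Definition viso (V : quantale) (Z : Type) (c : Z -> Z -> V) (u v : Z) : Prop :=
  qle V (qk V) (c u v) /\ qle V (qk V) (c v u).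

Definition Lclosure (V : quantale) (W : Type) (d : W -> W -> V)
  (M : W -> Prop) : W -> Prop :=
  fun w => forall (Z : Type) (c : Z -> Z -> V) (g h : W -> Z),
    is_vcat V Z c -> is_vfunctor V W Z d c g -> is_vfunctor V W Z d c h ->
    (forall m, M m -> g m = h m) -> viso V Z c (g w) (h w).


(* If x ≅ y then (x, y) ≅ (y, y) in X × X, so every V-functor g sends (x, y)
   to a point isomorphic to g (y, y); two V-functors agreeing on the diagonal
   therefore give isomorphic values at (x, y).  Conversely, the two projections
   are V-functors X × X -> X agreeing on the diagonal. *)

Section QuantaleOrder.

Variable V : quantale.

Lemma qtens_monor (w u v : V) :
  qle V u v -> qle V (qtens V w u) (qtens V w v).
Proof.
  intros Huv.
  (* v is the supremum of {u, v}, and w ⊗ (-) preserves suprema *)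
  assert (Ev : v = qsup V (fun z => z = u \/ z = v)).
  { apply qle_antisym.
    - apply qsup_ub; auto.
    - apply qsup_least; intros z [-> | ->]; auto using qle_refl. }
  rewrite Ev, qtens_sup. apply qsup_ub. exists u; auto.
Qed.

Lemma qtens_mono (u u' v v' : V) :
  qle V u u' -> qle V v v' -> qle V (qtens V u v) (qtens V u' v').
Proof.
  intros Hu Hv. apply qle_trans with (qtens V u v').
  - now apply qtens_monor.
  - rewrite (qtens_comm V u), (qtens_comm V u'). now apply qtens_monor.
Qed.

Lemma qmeet_glb (w u v : V) :
  qle V w u -> qle V w v -> qle V w (qmeet V u v).
Proof. intros; apply qsup_ub; auto. Qed.

Lemma qmeet_lel (u v : V) : qle V (qmeet V u v) u.
Proof. apply qsup_least; intros z [? _]; auto. Qed.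

Lemma qmeet_ler (u v : V) : qle V (qmeet V u v) v.
Proof. apply qsup_least; intros z [_ ?]; auto. Qed.

End QuantaleOrder.

Section Isomorphism.

Variables (V : quantale) (Z : Type) (c : Z -> Z -> V).
Hypothesis Zcat : is_vcat V Z c.

Lemma viso_refl (z : Z) : viso V Z c z z.
Proof. split; apply (proj1 Zcat). Qed.

Lemma viso_sym (u v : Z) : viso V Z c u v -> viso V Z c v u.
Proof. intros [? ?]; split; assumption. Qed.

Lemma k_le_hom_trans (u v w : Z) :
  qle V (qk V) (c u v) -> qle V (qk V) (c v w) -> qle V (qk V) (c u w).
Proof.
  intros Huv Hvw. apply qle_trans with (qtens V (c u v) (c v w)).
  - rewrite <- (qtens_k V (qk V)). now apply qtens_mono.
  - apply (proj2 Zcat).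
Qed.

Lemma viso_trans (u v w : Z) :
  viso V Z c u v -> viso V Z c v w -> viso V Z c u w.
Proof.
  intros [Huv Hvu] [Hvw Hwv]; split; eapply k_le_hom_trans; eassumption.
Qed.

End Isomorphism.

Lemma vfunctor_viso (V : quantale) (W Z : Type) (d : W -> W -> V)
    (c : Z -> Z -> V) (f : W -> Z) (u v : W) :
  is_vfunctor V W Z d c f -> viso V W d u v -> viso V Z c (f u) (f v).
Proof.
  intros Hf [Huv Hvu]; split; eapply qle_trans;
    [exact Huv | apply Hf | exact Hvu | apply Hf].
Qed.

Section Product.

Variables (V : quantale) (X : Type) (a : X -> X -> V).

Lemma fst_vfunctor : is_vfunctor V (X * X) X (prod_struct V X a) a fst.
Proof. intros p q; apply qmeet_lel. Qed.

Lemma snd_vfunctor : is_vfunctor V (X * X) X (prod_struct V X a) a snd.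
Proof. intros p q; apply qmeet_ler. Qed.

Lemma prod_viso (x x' y y' : X) :
  viso V X a x x' -> viso V X a y y' ->
  viso V (X * X) (prod_struct V X a) (x, y) (x', y').
Proof. intros [? ?] [? ?]; split; apply qmeet_glb; assumption. Qed.

End Product.

Theorem mainTheorem9 (V : quantale) (X : Type) (a : X -> X -> V) :
  is_vcat V X a ->
  forall p : X * X,
    Lclosure V (X * X) (prod_struct V X a) (fun q => fst q = snd q) p <->
    viso V X a (fst p) (snd p).
Proof.
  intros Xcat [x y]; simpl; split.
  - intros Hcl. apply (Hcl X a fst snd Xcat).
    + apply fst_vfunctor.
    + apply snd_vfunctor.
    + auto.
  - intros Hxy Z c g h Zcat Hg Hh Hdiag.
    assert (Hpair : viso V (X * X) (prod_struct V X a) (x, y) (y, y))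
      by (apply prod_viso; auto using viso_refl).
    assert (Hgh : g (y, y) = h (y, y)) by (apply Hdiag; reflexivity).
    apply viso_trans with (g (y, y)); [assumption| |].
    + eapply vfunctor_viso; eassumption.
    + rewrite Hgh. apply viso_sym. eapply vfunctor_viso; eassumption.
Qed.
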